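(* In the setting of Problem A with $m>0$ and $0<\underline\theta<\overline\theta$, let $z\in\mathcal H_0$ and $w\in\mathcal H$ with $w\notin(A+B+C+D)(Gz)$. Then the bracketing/bisection procedure (see context), started from any $\rho^0>0$, terminates after finitely many steps and returns $(\rho,x,y)$ with $\rho>0$ and $x\in\mathcal H$ satisfying (5.3)–(5.4), and $y=(Gz-x)/\rho+w+[B(x)-B(Gz)]+[D(x)-D_{(Gz)}(x)]$.
   Context: Problem A setting: $\mathcal H_0,\mathcal H$ real Hilbert spaces; $A:\mathcal H\rightrightarrows\mathcal H$ maximal monotone; $B:\mathcal H\to\mathcal H$ monotone and $\ell$-Lipschitz ($\ell\ge0$); $C:\mathcal H\to\mathcal H$ $\beta$-cocoercive with $\beta\in(0,\infty]$, i.e. $\langle x-y,Cx-Cy\rangle\ge\beta\|Cx-Cy\|^2$ (with $1/\infty=0$); $D:\mathcal H\to\mathcal H$ monotone and continuously differentiable with $m$-Lipschitz derivative $D'$; $G:\mathcal H_0\to\mathcal H$ bounded linear. For $u\in\mathcal H$, $D_{(u)}(x):=D(u)+D'(u)(x-u)$. For a maximal monotone $S$, $J_S:=(S+I)^{-1}$. Given $\hat\delta>0$ and $0<\underline\theta<\overline\theta$, Problem A asks, for given $z\in\mathcal H_0$, $w\in\mathcal H$, for $\rho>0$ and $x\in\mathcal H$ with (5.3) $x=J_{\rho(A+D_{(Gz)})}\big(Gz+\rho w-\rho(B+C)(Gz)\big)$ and (5.4) $\underline\theta\le4\ell^2\rho^2+(\beta^{-1}+\hat\delta)\rho+(m\rho\|x-Gz\|)^2\le\overline\theta$.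 Bracketing/bisection procedure: for $\rho>0$ let $x(\rho):=J_{\rho(A+D_{(Gz)})}\big(Gz+\rho w-\rho(B+C)(Gz)\big)$ and $q(\rho):=4\ell^2\rho^2+(\beta^{-1}+\hat\delta)\rho+(m\rho\|x(\rho)-Gz\|)^2$. Given $\rho^0>0$: if $\underline\theta\le q(\rho^0)\le\overline\theta$, return $\rho=\rho^0$. If $q(\rho^0)<\underline\theta$, set $t_-=\rho^0$, $t_+=\rho^0\overline\theta/q(\rho^0)$; if $q(\rho^0)>\overline\theta$, set $t_-=\rho^0\underline\theta/q(\rho^0)$, $t_+=\rho^0$. Then repeat: set $\tilde\rho=\sqrt{t_-t_+}$; if $\underline\theta\le q(\tilde\rho)\le\overline\theta$, return $\rho=\tilde\rho$; if $q(\tilde\rho)>\overline\theta$ set $t_+=\tilde\rho$; if $q(\tilde\rho)<\underline\theta$ set $t_-=\tilde\rho$. On return with $\rho$, output $x=x(\rho)$ and $y=(Gz-x)/\rho+w+[B(x)-B(Gz)]+[D(x)-D_{(Gz)}(x)]$. *)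

From HB Require Import structures.
From mathcomp Require Import all_boot all_order all_algebra.
From mathcomp Require Import all_classical all_reals all_analysis.
Set Implicit Arguments. Unset Strict Implicit. Unset Printing Implicit Defensive.
Import Order.TTheory GRing.Theory Num.Theory.
Import numFieldNormedType.Exports.
Local Open Scope classical_set_scope.
Local Open Scope ring_scope.

Section Defs.
Variable R : realType.

(** [ip] is a (real) inner product on the normed space [V] inducing its norm.
    Together with completeness of [V] this makes [V] a real Hilbert space. *)
Definition is_inner_product (V : normedModType R) (ip : V -> V -> R) : Prop :=
  [/\ forall x y, ip x y = ip y x,
      forall x y z, ip (x + y) z = ip x z + ip y z,
      forall (a : R) x y, ip (a *: x) y = a * ip x y &
      forall x, ip x x = `|x| ^+ 2].

Variable V : normedModType R.
Variable ip : V -> V -> R.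

Definition monotone_op (S : V -> set V) : Prop :=
  forall x y u v, S x u -> S y v -> 0 <= ip (x - y) (u - v).

Definition maximal_monotone (S : V -> set V) : Prop :=
  monotone_op S /\
  forall S' : V -> set V, monotone_op S' ->
    (forall x u, S x u -> S' x u) -> forall x u, S' x u -> S x u.

Definition monotone_fun (f : V -> V) : Prop :=
  forall x y, 0 <= ip (x - y) (f x - f y).

(** x ∈ J_S(v) = (S + I)^{-1}(v), i.e. v ∈ S x + x *)
Definition resolvent_rel (S : V -> set V) (v x : V) : Prop := S x (v - x).

(** J_S(v) as a function (single-valued when S is maximal monotone) *)
Definition resolvent (S : V -> set V) (v : V) : V := xget 0 (resolvent_rel S v).

Definition scale_op (rho : R) (S : V -> set V) : V -> set V :=
  fun x => [set rho *: a | a in S x].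
Definition add_op (S : V -> set V) (f : V -> V) : V -> set V :=
  fun x => [set a + f x | a in S x].

Definition lin_at (D : V -> V) (u : V) : V -> V :=
  fun x => D u + 'd D u (x - u).

End Defs.

Section Bisection.
Variable R : realType.

Inductive bstate := BDone of R | BBracket of R & R.

Variables (q : R -> R) (lo hi : R).

Definition binit (rho0 : R) : bstate :=
  if (lo <= q rho0) && (q rho0 <= hi) then BDone rho0
  else if q rho0 < lo then BBracket rho0 (rho0 * hi / q rho0)
  else BBracket (rho0 * lo / q rho0) rho0.

Definition bstep (s : bstate) : bstate :=
  match s with
  | BDone r => BDone r
  | BBracket tm tp =>
      let t := Num.sqrt (tm * tp) in
      if (lo <= q t) && (q t <= hi) then BDone t
      else if hi < q t then BBracket tm t
      else BBracket t tp
  end.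

Definition bstate_after (rho0 : R) (n : nat) : bstate := iter n bstep (binit rho0).

End Bisection.

Section ProblemA.
Variables (R : realType) (H0 H : normedModType R).
Variables (A : H -> set H) (B C D : H -> H) (G : H0 -> H).
Variables (ell binv dhat m : R).
Variables (z : H0) (w : H).

Definition probA_arg (rho : R) : H := G z + rho *: w - rho *: (B (G z) + C (G z)).
Definition probA_op (rho : R) : H -> set H := scale_op rho (add_op A (lin_at D (G z))).
Definition probA_x (rho : R) : H := resolvent (probA_op rho) (probA_arg rho).

(** q(rho); [binv] stands for beta^{-1} *)
Definition probA_merit (rho : R) (x : H) : R :=
  4 * ell ^+ 2 * rho ^+ 2 + (binv + dhat) * rho + (m * rho * `|x - G z|) ^+ 2.
Definition probA_q (rho : R) : R := probA_merit rho (probA_x rho).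

Definition probA_y (rho : R) (x : H) : H :=
  rho^-1 *: (G z - x) + w + (B x - B (G z)) + (D x - lin_at D (G z) x).

(** output of the procedure after n steps (None = not yet terminated) *)
Definition probA_output (lo hi rho0 : R) (n : nat) : option (R * H * H) :=
  match bstate_after probA_q lo hi rho0 n with
  | BDone rho => Some (rho, probA_x rho, probA_y rho (probA_x rho))
  | BBracket _ _ => None
  end.

End ProblemA.

From HB Require Import structures.
From mathcomp Require Import all_boot all_order all_algebra.
From mathcomp Require Import all_classical all_reals all_analysis.
From mathcomp Require Import ring lra.
Import Order.TTheory GRing.Theory Num.Theory.
Import numFieldNormedType.Exports.
Local Open Scope classical_set_scope.
Local Open Scope ring_scope.

(* T := A + D_(Gz) is maximal monotone: D_(Gz) is monotone (the derivative of a
   monotone map is monotone) and Lipschitz, and adding a monotone Lipschitz map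
   keeps maximality. By Minty's theorem, proved by minimizing the Fitzpatrick
   function of T plus (|x|^2 + |u|^2)/2, every resolvent of rho T is defined,
   so x(rho) is well defined. Monotonicity of T along the path rho |-> x(rho)
   shows that |x(rho) - Gz| is nondecreasing and that
   |x(s) - x(r)| <= (s - r)/s |x(s) - Gz| for r <= s. Hence q(rho)/rho is
   nondecreasing, which makes the initial bracket valid, and q is Lipschitz on
   bounded intervals; since geometric-mean bisection shrinks the relative width
   of the bracket, q lands in [theta_lo, theta_hi] after finitely many steps. *)

Set Implicit Arguments. Unset Strict Implicit. Unset Printing Implicit Defensive.

Section InnerProduct.
Variables (R : realType) (V : normedModType R) (ip : V -> V -> R).
Hypothesis hip : is_inner_product ip.

Lemma ipC x y : ip x y = ip y x. Proof. by case: hip. Qed.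
Lemma ipDl x y z : ip (x + y) z = ip x z + ip y z. Proof. by case: hip. Qed.
Lemma ipZl a x y : ip (a *: x) y = a * ip x y. Proof. by case: hip. Qed.
Lemma ipxx x : ip x x = `|x| ^+ 2. Proof. by case: hip. Qed.

Lemma ipDr x y z : ip x (y + z) = ip x y + ip x z.
Proof. by rewrite ipC ipDl !(ipC x). Qed.
Lemma ipZr a x y : ip x (a *: y) = a * ip x y.
Proof. by rewrite ipC ipZl ipC. Qed.
Lemma ipNl x y : ip (- x) y = - ip x y.
Proof. by rewrite -scaleN1r ipZl mulN1r. Qed.
Lemma ipNr x y : ip x (- y) = - ip x y.
Proof. by rewrite ipC ipNl ipC. Qed.
Lemma ip0l x : ip 0 x = 0.
Proof. by rewrite -(scale0r 0) ipZl mul0r. Qed.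
Lemma ip0r x : ip x 0 = 0.
Proof. by rewrite ipC ip0l. Qed.
Lemma ipBl x y z : ip (x - y) z = ip x z - ip y z.
Proof. by rewrite ipDl ipNl. Qed.
Lemma ipBr x y z : ip x (y - z) = ip x y - ip x z.
Proof. by rewrite ipDr ipNr. Qed.

Definition ipE := (ipBl, ipBr, ipDl, ipDr, ipNl, ipNr, ipZl, ipZr).

Lemma normD2 x y : `|x + y| ^+ 2 = `|x| ^+ 2 + 2 * ip x y + `|y| ^+ 2.
Proof. rewrite -!ipxx !ipE (ipC y x); lra. Qed.
Lemma normB2 x y : `|x - y| ^+ 2 = `|x| ^+ 2 - 2 * ip x y + `|y| ^+ 2.
Proof. by rewrite normD2 ipNr normrN; lra. Qed.

Lemma cauchy_schwarz x y : ip x y <= `|x| * `|y|.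
Proof.
have [->|x0] := eqVneq x 0; first by rewrite ip0l normr0 mul0r.
have [->|y0] := eqVneq y 0; first by rewrite ip0r normr0 mulr0.
have ab_gt0 : 0 < `|x| * `|y| by rewrite mulr_gt0 ?normr_gt0.
set a := `|x| in ab_gt0 *; set b := `|y| in ab_gt0 *.
have := exprn_ge0 2 (normr_ge0 (b *: x - a *: y)).
rewrite normB2 !normrZ !ipE (ger0_norm (normr_ge0 x)) (ger0_norm (normr_ge0 y)) -/a -/b.
move=> h; rewrite -subr_ge0 -(pmulr_rge0 _ ab_gt0); nra.
Qed.

Lemma normr_ip_le x y : `|ip x y| <= `|x| * `|y|.
Proof.
rewrite ler_norml cauchy_schwarz andbT.
have := cauchy_schwarz x (- y); rewrite ipNr normrN; lra.
Qed.

Lemma monotone_cross (S : V -> set V) x y u b : monotone_op ip S ->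
  S x u -> S y b -> ip x b + ip y u <= ip x u + ip y b.
Proof. by move=> hS hxu hyb; have := hS _ _ _ _ hxu hyb; rewrite !ipE (ipC y); lra. Qed.

Lemma maximal_monotone_related (S : V -> set V) x u : maximal_monotone ip S ->
  (forall y b, S y b -> 0 <= ip (x - y) (u - b)) -> S x u.
Proof.
case=> hmon hmax hx.
pose S' z := [set a | S z a \/ (z = x /\ a = u)].
apply: (hmax S'); last by right.
- move=> x1 y1 u1 v1 [h1|[-> ->]] [h2|[-> ->]].
  + exact: hmon.
  + by have := hx _ _ h1; rewrite -(opprB x1) -(opprB u1) ipNl ipNr opprK.
  + exact: hx.
  + by rewrite subrr ip0l.
- by move=> z a h; left.
Qed.

Lemma maximal_monotone_graph_nonempty (S : V -> set V) :
  maximal_monotone ip S -> exists y b, S y b.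
Proof.
move=> hS; case: (pselect (exists y b, S y b)) => [//|hn].
exists 0, 0; apply: maximal_monotone_related => // y b h.
by exfalso; apply: hn; exists y, b.
Qed.

Lemma maximal_monotone_shift (S : V -> set V) v : maximal_monotone ip S ->
  maximal_monotone ip (fun x => [set a | S x (a + v)]).
Proof.
have addK (c a b : V) : a + c - (b + c) = a - b by rewrite opprD addrACA subrr addr0.
case=> hmon hmax; split=> [x y u b /= h1 h2|T hT hsub x u hxu /=].
  by have := hmon _ _ _ _ h1 h2; rewrite addK.
apply: (hmax (fun x => [set a | T x (a - v)])) => /=.
- by move=> x1 y1 u1 v1 h1 h2; have := hT _ _ _ _ h1 h2; rewrite addK.
- by move=> x1 a h; apply: hsub; rewrite /= subrK.
- by rewrite addrK.
Qed.

Lemma maximal_monotone_scale (S : V -> set V) (l : R) : 0 < l ->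
  maximal_monotone ip S -> maximal_monotone ip (scale_op l S).
Proof.
move=> l0 [hmon hmax]; have l_neq0 : l != 0 by rewrite gt_eqF.
split=> [x y _ _ [a ha <-] [b hb <-]|T hT hsub x c hxc].
  by rewrite -scalerBr ipZr mulr_ge0 ?(ltW l0) ?hmon.
exists (l^-1 *: c); last by rewrite scalerA mulfV // scale1r.
apply: (hmax (fun x => [set a | T x (l *: a)])) => /=.
- move=> x1 y1 a1 b1 h1 h2; have := hT _ _ _ _ h1 h2.
  by rewrite -scalerBr ipZr pmulr_rge0.
- by move=> x1 a h; apply: hsub; exists a.
- by rewrite scalerA mulfV // scale1r.
Qed.

Lemma monotone_differential (D : V -> V) u : monotone_fun ip D ->
  differentiable D u -> forall h, 0 <= ip h ('d D u h).
Proof.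
move=> hD hd h; rewrite -deriveE //.
set dv := 'D_h D u.
set q := fun t : R => t^-1 *: ((D \o shift u) (t *: h) - D u).
have cv : q @ (0:R)^' --> dv by exact: diff_derivable.
have q_ge0 t : 0 <= ip h (q t).
  rewrite /q ipZr /=; have [->|t0] := eqVneq t 0; first by rewrite invr0 mul0r.
  have := hD (t *: h + u) u; rewrite addrK ipZl => ht.
  have -> : t^-1 * ip h (D (t *: h + u) - D u) =
            t^-1 ^+ 2 * (t * ip h (D (t *: h + u) - D u)) by field.
  by rewrite mulr_ge0 ?sqr_ge0.
rewrite leNgt; apply/negP => neg.
set e := - ip h dv / (`|h| + 1).
have h1_gt0 : 0 < `|h| + 1 by rewrite ltr_wpDl.
have e0 : 0 < e by rewrite divr_gt0 // oppr_gt0.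
have eh : e * (`|h| + 1) = - ip h dv by rewrite mulfVK // gt_eqF.
have near_dv : \forall t \near (0:R)^', `|dv - q t| < e.
  by move: (e) e0; apply/cvgrPdist_lt.
have [t ht] := @filter_ex _ _ (Proper_dnbhs_numFieldType (0:R)) _ near_dv.
have := normr_ip_le h (dv - q t); rewrite ler_norml ipBr => /andP[+ _].
have : `|h| * `|dv - q t| <= `|h| * e by rewrite ler_wpM2l // ltW.
have := q_ge0 t; have := normr_ge0 h; nra.
Qed.

Lemma lin_atB (D : V -> V) u x y :
  lin_at D u x - lin_at D u y = 'd D u (x - y).
Proof.
rewrite /lin_at opprD addrACA subrr add0r -linearB.
by rewrite opprB addrA subrK.
Qed.

Lemma monotone_lin_at (D : V -> V) u : monotone_fun ip D -> differentiable D u ->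
  monotone_fun ip (lin_at D u).
Proof. by move=> hD hd x y; rewrite lin_atB; exact: monotone_differential. Qed.

Lemma differential_bounded (D : V -> V) u : differentiable D u ->
  exists2 K, 0 <= K & forall h, `|'d D u h| <= K * `|h|.
Proof.
move=> hd; have := (linear_bounded_continuous ('d D u)).2 (diff_continuous hd).
by move=> /linear_boundedP /pinfty_ex_gt0 [K K0 hK]; exists K => //; exact: ltW.
Qed.

End InnerProduct.

Lemma invS_lt (R : realType) (e : R) : 0 < e ->
  exists N, forall n, (N <= n)%N -> n.+1%:R^-1 < e.
Proof.
move=> e0; have [N _ hN] := near_infty_natSinv_lt (PosNum e0).
by exists N => n /hN.
Qed.

Lemma ge0_of_small_perturbation (R : realType) (a k : R) :
  (forall t, 0 < t -> t <= 1 -> 0 <= a + t * k) -> 0 <= a.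
Proof.
move=> h; apply/ler_addgt0Pr => e e0.
pose t := Num.min 1 (e / (`|k| + 1)).
have k1 : 0 < `|k| + 1 by rewrite ltr_wpDl.
have t0 : 0 < t by rewrite lt_min ltr01 divr_gt0.
have te : t <= e / (`|k| + 1) by rewrite ge_min lexx orbT.
have t1 : t <= 1 by rewrite ge_min lexx.
have : t * k <= e.
  apply: le_trans (ler_norm _) _; rewrite normrM (gtr0_norm t0).
  apply: le_trans (ler_wpM2r (normr_ge0 k) te) _.
  by rewrite mulrAC ler_pdivrMr // ler_pM2l //; lra.
by have := h t t0 t1; lra.
Qed.

Lemma harmonic_cauchy_lim (R : realType) (V : completeNormedModType R)
    (y : nat -> V) (C : R) : 0 <= C ->
  (forall n k, `|y n - y k| ^+ 2 <= C * (n.+1%:R^-1 + k.+1%:R^-1)) ->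
  exists l, forall e, 0 < e -> exists N, forall n, (N <= n)%N -> `|l - y n| < e.
Proof.
move=> C0 hy.
have y_cauchy e : 0 < e -> exists N, forall n k, (N <= n)%N -> (N <= k)%N ->
    `|y n - y k| < e.
  move=> e0; have [N hN] : exists N, forall n, (N <= n)%N ->
      n.+1%:R^-1 < e ^+ 2 / (2 * (C + 1)).
    by apply: invS_lt; rewrite divr_gt0 ?exprn_gt0 //; lra.
  exists N => n k hn hk; rewrite -(ltr_pXn2r (ltn0Sn 1)) ?nnegrE ?(ltW e0) //.
  apply: le_lt_trans (hy n k) _.
  have := hN n hn; have := hN k hk; rewrite !ltr_pdivlMr; try lra.
  have : 0 <= n.+1%:R^-1 :> R by rewrite invr_ge0 ler0n.
  have : 0 <= k.+1%:R^-1 :> R by rewrite invr_ge0 ler0n.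
  set a := n.+1%:R^-1; set c := k.+1%:R^-1; lra.
have cv : cvg (y @ \oo).
  apply/cauchy_cvgP/cauchy_ballP => e e0; rewrite near_map2.
  have [N hN] := y_cauchy e e0.
  exists ([set n | (N <= n)%N], [set n | (N <= n)%N]); first by split; exists N.
  by case=> n k [/= hn hk]; rewrite -ball_normE /= distrC hN.
exists (lim (y @ \oo)) => e e0.
by have [N _ hN] := (cvgrPdist_lt _ _).1 cv e e0; exists N => n /hN.
Qed.

Section Minty.
Variables (R : realType) (V : completeNormedModType R) (ip : V -> V -> R).
Hypothesis hip : is_inner_product ip.
Variable S : V -> set V.
Hypothesis hS : maximal_monotone ip S.

(* The supremum of [fitz y b x u] over the graph of S is the Fitzpatrick
   function of S at (x, u) plus (|x|^2 + |u|^2)/2. *)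
Definition fitz y b x u := ip x b + ip y u - ip y b + (`|x| ^+ 2 + `|u| ^+ 2) / 2.

Definition fitz_bound x u c := forall y b, S y b -> fitz y b x u <= c.

Lemma fitz_bound_ge0 x u c : fitz_bound x u c -> 0 <= c.
Proof.
move=> hb; rewrite leNgt; apply/negP => c0.
have := exprn_ge0 2 (normr_ge0 (x + u)); rewrite (normD2 hip) => xu.
have hx : S x u.
  apply: (maximal_monotone_related hip) => // y b hyb; have := hb y b hyb.
  by rewrite /fitz !(ipE hip) (ipC hip y u) (ipC hip y b); lra.
by have := hb x u hx; rewrite /fitz; lra.
Qed.

Definition fitz_levels := [set c | exists x u, fitz_bound x u c].

Lemma fitz_levels_has_inf : has_inf fitz_levels.
Proof.
split; last by exists 0 => c [x [u /fitz_bound_ge0]].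
have [y0 [b0 h0]] := maximal_monotone_graph_nonempty hip hS.
exists (fitz y0 b0 y0 b0), y0, b0 => y b h.
by have := monotone_cross hip hS.1 h0 h; rewrite /fitz; lra.
Qed.

Definition fitz_min := inf fitz_levels.

Lemma fitz_min_le x u c : fitz_bound x u c -> fitz_min <= c.
Proof. by move=> hb; apply: ge_inf; [case: fitz_levels_has_inf | exists x, u]. Qed.

Lemma fitz_bound_midpoint x1 u1 c1 x2 u2 c2 :
  fitz_bound x1 u1 c1 -> fitz_bound x2 u2 c2 ->
  fitz_bound (2^-1 *: (x1 + x2)) (2^-1 *: (u1 + u2))
    ((c1 + c2) / 2 - (`|x1 - x2| ^+ 2 + `|u1 - u2| ^+ 2) / 8).
Proof.
move=> h1 h2 y b hyb; have := h1 y b hyb; have := h2 y b hyb; rewrite /fitz.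
rewrite !(ipE hip) !normrZ !exprMn (normD2 hip x1) (normD2 hip u1).
rewrite (normB2 hip x1) (normB2 hip u1) ger0_norm ?invr_ge0 ?ler0n //.
have -> : (2^-1 : R) ^+ 2 = 4^-1 by rewrite expr2 -invfM; congr _^-1; ring.
lra.
Qed.

Lemma fitz_minimizing_seq : exists p : nat -> V * V,
  forall n, fitz_bound (p n).1 (p n).2 (fitz_min + n.+1%:R^-1).
Proof.
suff /choice[p hp] : forall n : nat,
    exists pu : V * V, fitz_bound pu.1 pu.2 (fitz_min + n.+1%:R^-1) by exists p.
move=> n; have n0 : 0 < n.+1%:R^-1 :> R by rewrite invr_gt0 ltr0Sn.
have [c [x [u hb]] hc] := inf_adherent n0 fitz_levels_has_inf.
by exists (x, u) => y b hyb; exact: le_trans (hb y b hyb) (ltW hc).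
Qed.

Lemma fitz_lipschitz y b x u x' u' d : 0 <= d -> d <= 1 ->
  `|x - x'| <= d -> `|u - u'| <= d ->
  fitz y b x u <= fitz y b x' u' + d * (`|b| + `|y| + `|x| + `|u| + 1).
Proof.
move=> d0 d1 hx hu; rewrite /fitz -!(ipxx hip).
have sqr_diff (a a' : V) : `|a - a'| <= d ->
    ip a a - ip a' a' <= d * (2 * `|a| + 1).
  move=> ha; have -> : ip a a - ip a' a' = ip (a - a') (a + a').
    by rewrite !(ipE hip) (ipC hip a' a); ring.
  apply: le_trans (cauchy_schwarz hip _ _) _; apply: ler_pM => //.
  apply: le_trans (ler_normD _ _) _.
  have : `|a'| <= `|a| + d.
    have -> : a' = a - (a - a') by rewrite opprB addrC subrK.
    by apply: le_trans (ler_normB _ _) _; rewrite lerD2l.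
  lra.
have tx : ip x b - ip x' b <= d * `|b|.
  rewrite -(ipBl hip); apply: le_trans (cauchy_schwarz hip _ _) _; exact: ler_wpM2r.
have tu : ip y u - ip y u' <= d * `|y|.
  rewrite -(ipBr hip); apply: le_trans (cauchy_schwarz hip _ _) _.
  by rewrite mulrC; exact: ler_wpM2r.
have := sqr_diff x x' hx; have := sqr_diff u u' hu; lra.
Qed.

Section MinimizingSequence.
Variable p : nat -> V * V.
Hypothesis hp : forall n, fitz_bound (p n).1 (p n).2 (fitz_min + n.+1%:R^-1).

Lemma minimizing_seq_close n k :
  `|(p n).1 - (p k).1| ^+ 2 + `|(p n).2 - (p k).2| ^+ 2
    <= 4 * (n.+1%:R^-1 + k.+1%:R^-1).
Proof.
have := fitz_min_le (fitz_bound_midpoint (hp n) (hp k)).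
by set a := n.+1%:R^-1; set c := k.+1%:R^-1; lra.
Qed.

Lemma fitz_min_attained : exists xs us, fitz_bound xs us fitz_min.
Proof.
have [xs hxs] : exists xs, forall e, 0 < e -> exists N, forall n, (N <= n)%N ->
    `|xs - (p n).1| < e.
  apply: (harmonic_cauchy_lim (C := 4)) => // n k.
  have := exprn_ge0 2 (normr_ge0 ((p n).2 - (p k).2)).
  have := minimizing_seq_close n k.
  by set a := n.+1%:R^-1; set c := k.+1%:R^-1; lra.
have [us hus] : exists us, forall e, 0 < e -> exists N, forall n, (N <= n)%N ->
    `|us - (p n).2| < e.
  apply: (harmonic_cauchy_lim (C := 4)) => // n k.
  have := exprn_ge0 2 (normr_ge0 ((p n).1 - (p k).1)).
  have := minimizing_seq_close n k.
  by set a := n.+1%:R^-1; set c := k.+1%:R^-1; lra.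
exists xs, us => y b hyb; apply/ler_addgt0Pr => e e0.
set K := `|b| + `|y| + `|xs| + `|us| + 1.
have K0 : 0 < K.
  by rewrite /K ltr_wpDl // !addr_ge0.
pose d := Num.min 1 (e / (2 * K)).
have d0 : 0 < d by rewrite lt_min ltr01 divr_gt0 ?mulr_gt0.
have d1 : d <= 1 by rewrite ge_min lexx.
have dK : d * K <= e / 2.
  have : d <= e / (2 * K) by rewrite ge_min lexx orbT.
  rewrite invfM => /(ler_wpM2r (ltW K0)).
  by rewrite -!mulrA mulVf ?gt_eqF // mulr1 mulrC.
have [N1 h1] := invS_lt (divr_gt0 e0 (ltr0Sn _ 1)).
have [N2 h2] := hxs d d0.
have [N3 h3] := hus d d0.
pose n := maxn (maxn N1 N2) N3.
have := fitz_lipschitz y b (ltW d0) d1 (ltW (h2 n _)) (ltW (h3 n _)).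
have := hp n hyb; have := h1 n _.
rewrite /n !leq_max !leqnn ?orbT -/K; set a := n.+1%:R^-1; lra.
Qed.

End MinimizingSequence.

Lemma fitz_min_variational xs us : fitz_bound xs us fitz_min ->
  forall y b, S y b -> 0 <= ip y b + ip xs y + ip us b
                          - fitz_min - (`|xs| ^+ 2 + `|us| ^+ 2) / 2.
Proof.
move=> hmin y1 b1 h1; set Q := (`|xs| ^+ 2 + `|us| ^+ 2) / 2.
apply: (@ge0_of_small_perturbation _ _ (Q - (ip xs y1 + ip us b1)
  + (`|y1| ^+ 2 + `|b1| ^+ 2) / 2)) => t t0 t1.
have t1' : 0 <= 1 - t by lra.
set q1 := (1 - t) *: xs + t *: y1; set q2 := (1 - t) *: us + t *: b1.
have hq : fitz_bound q1 q2 ((1 - t) * (fitz_min - Q) + t * ip y1 b1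
                            + (`|q1| ^+ 2 + `|q2| ^+ 2) / 2).
  move=> y b hyb; rewrite /fitz /q1 /q2 !(ipE hip) -/q1 -/q2.
  have := ler_wpM2l t1' (hmin y b hyb).
  have := ler_wpM2l (ltW t0) (monotone_cross hip hS.1 h1 hyb).
  by rewrite /fitz -/Q; lra.
have := fitz_min_le hq.
rewrite /q1 /q2 !(normD2 hip) !normrZ !(ipE hip) (ger0_norm t1') (gtr0_norm t0).
by rewrite /Q -(pmulr_rge0 _ t0) => h; nra.
Qed.

Lemma maximal_monotone_opp_point : exists x, S x (- x).
Proof.
have [p hp] := fitz_minimizing_seq.
have [xs [us hmin]] := fitz_min_attained hp.
exists (2^-1 *: (xs - us)); apply: (maximal_monotone_related hip) => // y b hyb.
have := fitz_min_variational hmin hyb; have := hmin y b hyb; rewrite /fitz.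
have := exprn_ge0 2 (normr_ge0 (xs + us)); rewrite (normD2 hip).
rewrite !(ipE hip) (ipC hip us xs) (ipC hip y xs) !(ipxx hip); lra.
Qed.

End Minty.

Lemma minty (R : realType) (V : completeNormedModType R) (ip : V -> V -> R)
  (S : V -> set V) : is_inner_product ip -> maximal_monotone ip S ->
  forall v, exists x, S x (v - x).
Proof.
move=> hip hS v.
have [x hx] := maximal_monotone_opp_point hip (maximal_monotone_shift v hS).
by exists x; rewrite addrC.
Qed.

Section MaximalMonotoneHilbert.
Variables (R : realType) (V : completeNormedModType R) (ip : V -> V -> R).
Hypothesis hip : is_inner_product ip.

Lemma maximal_monotone_add_lipschitz (A : V -> set V) (L : V -> V) (K : R) :
  maximal_monotone ip A -> monotone_fun ip L -> 0 <= K ->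
  (forall x y, `|L x - L y| <= K * `|x - y|) -> maximal_monotone ip (add_op A L).
Proof.
move=> hA hL K0 hK; split=> [x y _ _ [a ha <-] [b hb <-]|T hT hsub x u hxu].
  rewrite opprD addrACA (ipDr hip).
  by apply: addr_ge0; [exact: hA.1 | exact: hL].
(* Solve [x + t (u - L x) \in y + t A y] by Minty, with t small enough that
   t K <= 1/2; the monotone extension T then forces [y = x]. *)
pose t := (2 * K + 2)^-1.
have t0 : 0 < t by rewrite invr_gt0; lra.
have Kt : K * t <= 2^-1.
  by rewrite ler_pdivrMr; [rewrite mulrC ler_pdivlMr //|]; lra.
have [y [a ha hta]] := minty hip (maximal_monotone_scale hip t0 hA) (x + t *: (u - L x)).
have hTy : T y (a + L y) by apply: hsub; exists a.
set d := a - (u - L x).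
have hxy : x - y = t *: d by rewrite /d scalerBr hta addrAC addrK.
have e2 : u - (a + L y) = - d + (L x - L y).
  by rewrite /d opprB addrA (addrAC (u - L x)) subrK opprD addrA.
have := hT _ _ _ _ hxu hTy.
rewrite hxy e2 (ipZl hip) pmulr_rge0 // (ipDr hip) (ipNr hip) (ipxx hip) => h.
have h1 : ip d (L x - L y) <= `|d| * (K * (t * `|d|)).
  apply: le_trans (cauchy_schwarz hip _ _) _; apply: ler_wpM2l => //.
  by have := hK x y; rewrite hxy normrZ gtr0_norm.
have d0 : d = 0.
  apply/eqP; rewrite -normr_eq0 -sqrf_eq0 eq_le exprn_ge0 // andbT.
  by have := normr_ge0 d; rewrite expr2 in h *; nra.
have yx : y = x by apply/eqP; rewrite eq_sym -subr_eq0 hxy d0 scaler0.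
exists a; first by rewrite -yx.
by move/subr0_eq: d0 => ->; rewrite subrK.
Qed.

Lemma resolvent_scale_exists (T : V -> set V) rho v : maximal_monotone ip T ->
  0 < rho -> exists x, resolvent_rel (scale_op rho T) v x.
Proof. by move=> hT rho0; exact: minty hip (maximal_monotone_scale hip rho0 hT) v. Qed.

End MaximalMonotoneHilbert.

Lemma resolvent_scale_rel (R : realType) (V : normedModType R) (T : V -> set V)
    (rho : R) g v x : rho != 0 ->
  resolvent_rel (scale_op rho T) (g + rho *: v) x -> T x (rho^-1 *: (g - x) + v).
Proof.
move=> rho0 [c hc hcx]; suff -> : rho^-1 *: (g - x) + v = c by [].
apply: (scalerI rho0); rewrite hcx scalerDr scalerA mulfV // scale1r.
by rewrite addrAC.
Qed.

Lemma sqr_diff_le (R : realFieldType) (a b M : R) : 0 <= a -> a <= b -> b <= M ->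
  b ^+ 2 - a ^+ 2 <= 2 * M * (b - a).
Proof. by move=> a0 ab bM; rewrite subr_sqr (mulrC (b - a)); apply: ler_wpM2r; lra. Qed.

Section ResolventPath.
Variables (R : realType) (V : normedModType R) (ip : V -> V -> R).
Hypothesis hip : is_inner_product ip.
Variables (T : V -> set V) (X : R -> V) (g v : V).
Hypothesis hT : monotone_op ip T.
(* i.e. X r = J_(r T) (g + r v) *)
Hypothesis hX : forall r, 0 < r -> T (X r) (r^-1 *: (g - X r) + v).

Lemma resolvent_path_monotone r s : 0 < r -> 0 < s ->
  0 <= ip (X r - X s) (r^-1 *: (g - X r) - s^-1 *: (g - X s)).
Proof.
by move=> r0 s0; have := hT (hX r0) (hX s0); rewrite opprD addrACA subrr addr0.
Qed.

Lemma resolvent_path_dist_mono r s : 0 < r -> r <= s -> `|g - X r| <= `|g - X s|.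
Proof.
move=> r0 rs; have s0 : 0 < s by lra.
have := resolvent_path_monotone r0 s0.
have -> : X r - X s = (g - X s) - (g - X r) by rewrite opprB [RHS]addrC addrA subrK.
set P := g - X r; set Q := g - X s; clearbody P Q.
rewrite !(ipE hip) !(ipxx hip) (ipC hip Q P) => h.
have cs := cauchy_schwarz hip P Q.
have sr : s^-1 <= r^-1 by rewrite lef_pV2.
have r10 : 0 < r^-1 by rewrite invr_gt0.
have s10 : 0 < s^-1 by rewrite invr_gt0.
have h2 : r^-1 * `|P| ^+ 2 + s^-1 * `|Q| ^+ 2 <= (r^-1 + s^-1) * (`|P| * `|Q|).
  apply: le_trans (ler_wpM2l _ cs); lra.
rewrite leNgt; apply/negP => QP.
have : 0 <= s^-1 * `|Q| - r^-1 * `|P|.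
  have PQ : 0 < `|P| - `|Q| by rewrite subr_gt0.
  rewrite -(pmulr_rge0 _ PQ).
  by move: h2; rewrite !expr2; lra.
have := normr_ge0 Q; nra.
Qed.

Lemma resolvent_path_lipschitz r s : 0 < r -> r <= s ->
  `|X s - X r| <= (s - r) / s * `|g - X s|.
Proof.
move=> r0 rs; have s0 : 0 < s by lra.
have := resolvent_path_monotone r0 s0.
have -> : X r - X s = (g - X s) - (g - X r) by rewrite opprB [RHS]addrC addrA subrK.
have -> : X s - X r = (g - X r) - (g - X s) by rewrite opprB [RHS]addrC addrA subrK.
set P := g - X r; set Q := g - X s; clearbody P Q.
have -> : r^-1 *: P - s^-1 *: Q = - r^-1 *: (Q - P) + (r^-1 - s^-1) *: Q.
  by rewrite scaleNr scalerBr opprB scalerBl addrA subrK.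
rewrite (ipDr hip) !(ipZr hip) (ipxx hip) (distrC Q) => mono.
have cs := cauchy_schwarz hip (Q - P) Q; rewrite (distrC Q) in cs.
set d := `|P - Q| in mono cs *.
have sr : 0 <= r^-1 - s^-1 by rewrite subr_ge0 lef_pV2.
have dQ : d ^+ 2 <= (s - r) / s * (d * `|Q|).
  have -> : (s - r) / s = r * (r^-1 - s^-1) by field; rewrite ?gt_eqF.
  have h : r^-1 * d ^+ 2 <= (r^-1 - s^-1) * (d * `|Q|).
    by have := ler_wpM2l sr cs; lra.
  rewrite -mulrA; apply: le_trans (ler_wpM2l (ltW r0) h).
  by rewrite mulrA mulfV ?gt_eqF // mul1r.
have [->|d0] := eqVneq d 0; first by rewrite mulr_ge0 ?divr_ge0 ?subr_ge0 // ltW.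
have d_gt0 : 0 < d by rewrite lt_def d0 normr_ge0.
by rewrite -(ler_pM2l d_gt0); move: dQ; rewrite expr2; lra.
Qed.

Variables (ell c m : R).
Hypothesis c_gt0 : 0 < c.

Definition path_merit r := 4 * ell ^+ 2 * r ^+ 2 + c * r + (m * r * `|X r - g|) ^+ 2.

Let dist_mono r s : 0 < r -> r <= s -> `|X r - g| <= `|X s - g|.
Proof. by rewrite distrC (distrC (X s)); exact: resolvent_path_dist_mono. Qed.

Lemma path_merit_gt0 r : 0 < r -> 0 < path_merit r.
Proof.
move=> r0; have := mulr_gt0 c_gt0 r0.
have := sqr_ge0 (m * r * `|X r - g|); have := mulr_ge0 (sqr_ge0 ell) (sqr_ge0 r).
rewrite /path_merit; lra.
Qed.

Lemma path_merit_ratio_mono s t : 0 < s -> s <= t ->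
  t * path_merit s <= s * path_merit t.
Proof.
move=> s0 st; rewrite -subr_ge0.
set Ns := `|X s - g|; set Nt := `|X t - g|.
have NsNt : Ns <= Nt by exact: dist_mono.
have sNs_le : s * Ns ^+ 2 <= t * Nt ^+ 2.
  by apply: ler_pM; rewrite ?sqr_ge0 ?lerXn2r ?nnegrE ?normr_ge0 //; lra.
have -> : s * path_merit t - t * path_merit s =
  s * t * (4 * ell ^+ 2 * (t - s) + m ^+ 2 * (t * Nt ^+ 2 - s * Ns ^+ 2)).
  by rewrite /path_merit -/Ns -/Nt !exprMn; ring.
apply: mulr_ge0; first by apply: mulr_ge0; lra.
by have := sqr_ge0 ell; have := sqr_ge0 m; nra.
Qed.

Lemma path_merit_lipschitz b0 : 0 < b0 -> exists2 K, 0 <= K &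
  forall s t, 0 < s -> s <= t -> t <= b0 ->
  path_merit t - path_merit s <= K * (t - s).
Proof.
move=> b0_gt0; set Nb := `|X b0 - g|.
have Nb0 : 0 <= Nb := normr_ge0 _.
exists (8 * ell ^+ 2 * b0 + c + 4 * m ^+ 2 * b0 * Nb ^+ 2).
  have := mulr_ge0 (sqr_ge0 ell) (ltW b0_gt0).
  have := mulr_ge0 (mulr_ge0 (sqr_ge0 m) (ltW b0_gt0)) (sqr_ge0 Nb).
  have := c_gt0; lra.
move=> s t s0 st tb; have t0 : 0 < t by lra.
set Ns := `|X s - g|; set Nt := `|X t - g|.
have Ns0 : 0 <= Ns := normr_ge0 _.
have NsNt : Ns <= Nt by exact: dist_mono.
have NtNb : Nt <= Nb by exact: dist_mono.
have tNt_le : t * (Nt - Ns) <= (t - s) * Nt.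
  have : Nt - Ns <= `|X t - X s|.
    by rewrite lerBlDr /Nt /Ns -{1}(subrK (X s) (X t)) -addrA ler_normD.
  move/le_trans/(_ (resolvent_path_lipschitz s0 st)); rewrite (distrC g) -/Nt.
  by move/(ler_wpM2l (ltW t0)); rewrite mulrA mulrCA mulfV ?gt_eqF // mulr1.
have tN_lip : t * Nt - s * Ns <= 2 * Nb * (t - s) by nra.
have sq_t := sqr_diff_le (ltW s0) st tb.
have sq_N : (t * Nt) ^+ 2 - (s * Ns) ^+ 2 <= 2 * (b0 * Nb) * (t * Nt - s * Ns).
  by apply: sqr_diff_le; [exact: mulr_ge0 (ltW s0) Ns0|..]; apply: ler_pM; lra.
have := ler_wpM2l (mulr_ge0 (ler0n _ 4) (sqr_ge0 ell)) sq_t.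
have := ler_wpM2l (sqr_ge0 m) (le_trans sq_N
  (ler_wpM2l (mulr_ge0 (ler0n _ 2) (mulr_ge0 (ltW b0_gt0) Nb0)) tN_lip)).
rewrite /path_merit -/Ns -/Nt !exprMn; lra.
Qed.

End ResolventPath.

Section Bisection.
Variables (R : realType) (q : R -> R) (lo hi : R).
Hypothesis lo_gt0 : 0 < lo.
Hypothesis lo_lt_hi : lo < hi.
Hypothesis q_gt0 : forall r, 0 < r -> 0 < q r.
Hypothesis q_ratio_mono : forall s t, 0 < s -> s <= t -> t * q s <= s * q t.
Hypothesis q_lipschitz : forall b0, 0 < b0 -> exists2 K, 0 <= K &
  forall s t, 0 < s -> s <= t -> t <= b0 -> q t - q s <= K * (t - s).

(* A geometric-mean split at least halves the relative width (b - a) / a of a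
   bracket; the harmonic decay recorded here is all that termination needs. *)
Definition bracket_inv (b0 E : R) (n : nat) (s : bstate R) : Prop :=
  match s with
  | BDone r => 0 < r /\ lo <= q r <= hi
  | BBracket a b =>
      [/\ 0 < a <= b, b <= b0, q a <= lo, hi <= q b & (b - a) * n.+1%:R <= a * E]
  end.

Lemma bracket_inv_step b0 E n s :
  bracket_inv b0 E n s -> bracket_inv b0 E n.+1 (bstep q lo hi s).
Proof.
case: s => [//|a b] /= [/andP[a0 ab] bb0 qa qb width].
set t := Num.sqrt (a * b).
have ab0 : 0 <= a * b by rewrite mulr_ge0 //; lra.
have t0 : 0 < t by rewrite sqrtr_gt0 mulr_gt0 //; lra.
have tt : t * t = a * b by rewrite -expr2 sqr_sqrtr.
have at' : a <= t by nra.
have tb : t <= b by nra.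
have eN : n.+2%:R = n.+1%:R + 1 :> R by rewrite -addn1 natrD.
have N1 : 1 <= n.+1%:R :> R by rewrite ler1n.
have left_width : (t - a) * n.+2%:R <= a * E.
  have : 2 * (t - a) <= b - a by nra.
  rewrite eN; nra.
case: ifP => [/andP[tlo thi]|tout]; first by split=> //; apply/andP.
case: ifP => thi.
  have hat : 0 < a <= t by rewrite a0 at'.
  by split=> //; [lra | exact: ltW].
have tlo : q t <= lo.
  by rewrite leNgt; apply/negP => lot; move: tout; rewrite (ltW lot) leNgt thi.
have htb : 0 < t <= b by rewrite t0 tb.
split=> //.
have bt : a * (b - t) = t * (t - a) by nra.
rewrite -(ler_pM2l a0) mulrA bt -mulrA.
have := ler_wpM2l (ltW t0) left_width; lra.
Qed.

Lemma bracket_inv_after b0 E n s :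
  bracket_inv b0 E 0 s -> bracket_inv b0 E n (iter n (bstep q lo hi) s).
Proof. by move=> h; elim: n => [//|n IH] /=; exact: bracket_inv_step. Qed.

Lemma bracket_inv0 a b : 0 < a -> a <= b -> q a <= lo -> hi <= q b ->
  bracket_inv b ((b - a) / a) 0 (BBracket a b).
Proof.
move=> a0 ab qa qb; have hab : 0 < a <= b by rewrite a0 ab.
by split=> //; rewrite mulr1 mulrC mulfVK ?gt_eqF.
Qed.

Lemma bracket_inv_init rho0 : 0 < rho0 ->
  exists b0 E, [/\ 0 < b0, 0 <= E & bracket_inv b0 E 0 (binit q lo hi rho0)].
Proof.
move=> r0; have q0 := q_gt0 r0; rewrite /binit.
case: ifP => [/andP[qlo qhi]|qout].
  by exists 1, 0; split=> //; split=> //; apply/andP.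
have width_ge0 a b : 0 < a -> a <= b -> 0 <= (b - a) / a.
  by move=> a0 ab; rewrite divr_ge0 ?subr_ge0 // ltW.
case: ifP => qlo.
  set b := rho0 * hi / q rho0.
  have bq : b * q rho0 = rho0 * hi by rewrite mulfVK // gt_eqF.
  have rb : rho0 <= b.
    by rewrite ler_pdivlMr // ler_pM2l //; apply: ltW; apply: lt_trans lo_lt_hi.
  exists b, ((b - rho0) / rho0); split; [lra | exact: width_ge0 | apply: bracket_inv0] => //.
  - exact: ltW.
  - by rewrite -(ler_pM2l r0) -bq q_ratio_mono.
have qhi : hi < q rho0.
  by rewrite ltNge; apply/negP => qhi; move: qout; rewrite qhi leNgt qlo.
set a := rho0 * lo / q rho0.
have aq : a * q rho0 = rho0 * lo by rewrite mulfVK // gt_eqF.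
have a0 : 0 < a by rewrite divr_gt0 // mulr_gt0.
have ar : a <= rho0 by rewrite ler_pdivrMr // ler_pM2l //; lra.
exists rho0, ((rho0 - a) / a); split; [done | exact: width_ge0 | apply: bracket_inv0] => //.
- by rewrite -(ler_pM2l r0) -aq q_ratio_mono.
- exact: ltW.
Qed.

Lemma bisection_terminates rho0 : 0 < rho0 -> exists n r,
  [/\ bstate_after q lo hi rho0 n = BDone r, 0 < r & lo <= q r <= hi].
Proof.
move=> r0; have [b0 [E [b0_gt0 E0 inv0]]] := bracket_inv_init r0.
have [K K0 q_lip] := q_lipschitz b0_gt0.
set n := Num.trunc (K * b0 * E / (hi - lo)).
have n_big : K * b0 * E / (hi - lo) < n.+1%:R := truncnS_gt _.
have := bracket_inv_after n inv0.
case Hn: (iter n _ _) => [r|a b] inv.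
  by case: inv => r0' qr; exists n, r.
case: inv => /andP[a0 ab] bb0 qa qb width.
exfalso; set N : R := n.+1%:R.
have hilo : 0 < hi - lo by rewrite subr_gt0.
have : (hi - lo) * N <= K * (b - a) * N.
  by rewrite ler_wpM2r ?ler0n //; have := q_lip a b a0 ab bb0; lra.
have : K * ((b - a) * N) <= K * (b0 * E).
  rewrite ler_wpM2l //; apply: le_trans width _; rewrite ler_wpM2r //; lra.
have : K * b0 * E < N * (hi - lo) by rewrite -ltr_pdivrMr.
lra.
Qed.

End Bisection.

Unset Implicit Arguments.

Theorem proposition5p8 (R : realType)
  (H0 H : completeNormedModType R)
  (ip0 : H0 -> H0 -> R) (ip : H -> H -> R)
  (hip0 : is_inner_product ip0) (hip : is_inner_product ip)
  (A : H -> set H) (B C D : H -> H) (G : {linear H0 -> H})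
  (ell binv dhat m theta_lo theta_hi : R)
  (hA : maximal_monotone ip A)
  (hell : 0 <= ell)
  (hBmon : monotone_fun ip B)
  (hBlip : forall x y, `|B x - B y| <= ell * `|x - y|)
  (hbinv : 0 <= binv)
  (hC : forall x y, `|C x - C y| ^+ 2 <= binv * ip (x - y) (C x - C y))
  (hDmon : monotone_fun ip D)
  (hDdiff : forall u, differentiable D u)
  (hDlip : forall u1 u2 h, `|'d D u1 h - 'd D u2 h| <= m * `|u1 - u2| * `|h|)
  (hG : continuous G)
  (hdhat : 0 < dhat) (hm : 0 < m)
  (hlo : 0 < theta_lo) (hlohi : theta_lo < theta_hi)
  (z : H0) (w : H)
  (hw : ~ (exists a, A (G z) a /\ w = a + B (G z) + C (G z) + D (G z)))
  (rho0 : R) (hrho0 : 0 < rho0) :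
  exists (n : nat) (rho : R) (x y : H),
    probA_output A B C D G ell binv dhat m z w theta_lo theta_hi rho0 n
      = Some (rho, x, y)
    /\ 0 < rho
    /\ resolvent_rel (scale_op rho (add_op A (lin_at D (G z))))
         (G z + rho *: w - rho *: (B (G z) + C (G z))) x
    /\ theta_lo <= 4 * ell ^+ 2 * rho ^+ 2 + (binv + dhat) * rho
                   + (m * rho * `|x - G z|) ^+ 2 <= theta_hi
    /\ y = rho^-1 *: (G z - x) + w + (B x - B (G z)) + (D x - lin_at D (G z) x).
Proof.
set g := G z; set T := add_op A (lin_at D g); set X := probA_x A B C D G z w.
have hT : maximal_monotone ip T.
  have [K K0 hK] := differential_bounded (hDdiff g).
  apply: (maximal_monotone_add_lipschitz hip hA
           (monotone_lin_at hip hDmon (hDdiff g)) K0).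
  by move=> x y; rewrite lin_atB.
have hX r : 0 < r -> resolvent_rel (scale_op r T) (g + r *: w - r *: (B g + C g)) (X r).
  move=> r0; have [x hx] := resolvent_scale_exists hip (probA_arg B C G z w r) hT r0.
  exact: xgetI hx.
have path r : 0 < r -> T (X r) (r^-1 *: (g - X r) + (w - (B g + C g))).
  move=> r0; apply: resolvent_scale_rel; first by rewrite gt_eqF.
  by rewrite scalerBr addrA; exact: hX.
have c_gt0 : 0 < binv + dhat by rewrite ltr_wpDl.
have [n [r [hn r0 hr]]] := bisection_terminates hlo hlohi
  (path_merit_gt0 X g ell m c_gt0)
  (path_merit_ratio_mono hip hT.1 path ell (binv + dhat) m)
  (path_merit_lipschitz hip hT.1 path ell m c_gt0) hrho0.
exists n, r, (X r), (probA_y B D G z w r (X r)).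
by rewrite /probA_output hn; do !split=> //; exact: hX.
Qed.
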